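(* If $G$ and $H$ are isoclinic finite groups with $|G|=|H|$, then $A_G(t)=A_H(t)$ and $B_G(t)=B_H(t)$.
   Context: For a finite group $G$ and $n\ge 0$, $G$ acts on $G^n$ by simultaneous conjugation. Let $G^{(n)}\subseteq G^n$ be the set of $n$-tuples of pairwise commuting elements. Let $\alpha_{G,n}$ (resp. $\beta_{G,n}$) be the number of $G$-orbits on $G^n$ (resp. on $G^{(n)}$), and set $A_G(t)=\sum_{n\ge0}\alpha_{G,n}t^n$, $B_G(t)=\sum_{n\ge0}\beta_{G,n}t^n$. Two finite groups $G$ and $H$ are isoclinic if there exist isomorphisms $\theta:G/Z(G)\to H/Z(H)$ and $\phi:G'\to H'$ (commutator subgroups) such that $\phi([g_1,g_2])=[h_1,h_2]$ whenever $\theta(g_iZ(G))=h_iZ(H)$, $i=1,2$. *)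

From mathcomp Require Import all_boot all_order all_fingroup all_solvable.
Set Implicit Arguments. Unset Strict Implicit. Unset Printing Implicit Defensive.
Local Open Scope group_scope.

Section Defs.
Variable gT : finGroupType.

Definition tuples (G : {set gT}) (n : nat) : {set {ffun 'I_n -> gT}} :=
  [set t : {ffun 'I_n -> gT} | [forall i, t i \in G]].

Definition ctuples (G : {set gT}) (n : nat) : {set {ffun 'I_n -> gT}} :=
  [set t in tuples G n | [forall i, forall j, t i * t j == t j * t i]].

Definition sconj n (t : {ffun 'I_n -> gT}) (g : gT) : {ffun 'I_n -> gT} :=
  [ffun i => t i ^ g].

Definition sorbit (G : {set gT}) n (t : {ffun 'I_n -> gT}) : {set {ffun 'I_n -> gT}} :=
  [set sconj t g | g in G].

Definition alpha (G : {set gT}) (n : nat) : nat :=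
  #|[set sorbit G t | t in tuples G n]|.

Definition beta (G : {set gT}) (n : nat) : nat :=
  #|[set sorbit G t | t in ctuples G n]|.
End Defs.

Definition isoclinic (gT hT : finGroupType) (G : {group gT}) (H : {group hT}) : Prop :=
  exists (theta : {morphism G / 'Z(G) >-> coset_of 'Z(H)})
         (phi : {morphism G^`(1) >-> hT}),
    [/\ isom (G / 'Z(G)) (H / 'Z(H)) theta,
        isom G^`(1) H^`(1) phi &
        forall g1 g2 h1 h2, g1 \in G -> g2 \in G -> h1 \in H -> h2 \in H ->
          theta (coset 'Z(G) g1) = coset 'Z(H) h1 ->
          theta (coset 'Z(G) g2) = coset 'Z(H) h2 ->
          phi [~ g1, g2] = [~ h1, h2]].

From mathcomp Require Import all_boot all_order all_fingroup all_solvable.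
Set Implicit Arguments. Unset Strict Implicit. Unset Printing Implicit Defensive.
Local Open Scope group_scope.

(* Since |G / Z(G)| = |H / Z(H)| and |G| = |H|, the centres have the same order, so a
   bijection f : G -> H can be chosen mapping every coset of Z(G) onto the coset of Z(H)
   that theta assigns to it. Commutators only depend on cosets of the centres, and phi is
   injective, so x and y commute iff f x and f y do. Hence f maps C_G(a) onto C_H(f a),
   and (commuting) n-tuples of C_G(a) onto those of C_H(f a). By Burnside's lemma,
   |G| alpha_{G,n} and |G| beta_{G,n} are the sums over a in G of the numbers of
   n-tuples, resp. commuting n-tuples, of C_G(a), which f carries over to H. *)

Section SimultaneousConjugation.
Variables (gT : finGroupType) (n : nat).
Implicit Types (A : {set gT}) (G : {group gT}) (t : {ffun 'I_n -> gT}).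

Lemma sconj1 : (@sconj gT n)^~ 1 =1 id.
Proof. by move=> t; apply/ffunP=> i; rewrite ffunE conjg1. Qed.

Lemma sconjM t : act_morph (@sconj gT n) t.
Proof. by move=> a b; apply/ffunP=> i; rewrite !ffunE conjgM. Qed.

Definition sconj_action := TotalAction sconj1 sconjM.

Lemma tuplesP A t : reflect (forall i, t i \in A) (t \in tuples A n).
Proof. by rewrite inE; apply: forallP. Qed.

Lemma tuples_sconj G a t : a \in G -> (sconj t a \in tuples G n) = (t \in tuples G n).
Proof. by move=> Ga; apply/tuplesP/tuplesP=> tG i; move: (tG i); rewrite ffunE groupJr. Qed.

Lemma ctuples_sconj G a t : a \in G -> (sconj t a \in ctuples G n) = (t \in ctuples G n).
Proof.
move=> Ga; rewrite [_ \in ctuples _ _]inE [t \in ctuples _ _]inE tuples_sconj //.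
congr (_ && _); apply: eq_forallb => i; apply: eq_forallb => j.
by rewrite !ffunE -!conjMg (inj_eq (@conjg_inj _ a)).
Qed.

Lemma afix_tuples A a : 'Fix_(tuples A n | sconj_action)[a] = tuples 'C_A[a] n.
Proof.
apply/setP=> t; rewrite in_setI.
apply/andP/tuplesP => [[/tuplesP tA /afix1P tfix] i | tC].
  rewrite inE tA; apply/cent1P/commgP/conjg_fixP.
  by rewrite -[in RHS]tfix /= ffunE.
split; first by apply/tuplesP=> i; case/setIP: (tC i).
apply/afix1P/ffunP=> i; rewrite /= ffunE; apply/conjg_fixP/commgP/cent1P.
by case/setIP: (tC i).
Qed.

Lemma afix_ctuples A a : 'Fix_(ctuples A n | sconj_action)[a] = ctuples 'C_A[a] n.
Proof.
by apply/setP=> t; rewrite /ctuples -afix_tuples !in_setI !inE andbAC.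
Qed.

Lemma alpha_Burnside G : (alpha G n * #|G|)%N = \sum_(a in G) #|tuples 'C_G[a] n|.
Proof.
have actsG : [acts G, on tuples G n | sconj_action].
  by apply/actsP=> a Ga t; apply: tuples_sconj.
rewrite -(Frobenius_Cauchy actsG); apply: eq_bigr => a _; by rewrite afix_tuples.
Qed.

Lemma beta_Burnside G : (beta G n * #|G|)%N = \sum_(a in G) #|ctuples 'C_G[a] n|.
Proof.
have actsG : [acts G, on ctuples G n | sconj_action].
  by apply/actsP=> a Ga t; apply: ctuples_sconj.
rewrite -(Frobenius_Cauchy actsG); apply: eq_bigr => a _; by rewrite afix_ctuples.
Qed.

End SimultaneousConjugation.

Section CommutationPreservingBijection.
Variables (gT hT : finGroupType) (G : {group gT}) (H : {group hT}) (f : gT -> hT).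
Hypothesis f_inj : {in G &, injective f}.
Hypothesis f_onto : f @: G = H.
Hypothesis f_comm : {in G &, forall x y, (f x * f y == f y * f x) = (x * y == y * x)}.

Definition tmap n (t : {ffun 'I_n -> gT}) : {ffun 'I_n -> hT} := [ffun i => f (t i)].

Lemma tmap_inj n (A : {set gT}) : A \subset G -> {in tuples A n &, injective (@tmap n)}.
Proof.
move=> sAG t1 t2 /tuplesP t1A /tuplesP t2A /ffunP eq_t; apply/ffunP=> i.
by apply: f_inj; rewrite ?(subsetP sAG) //; have := eq_t i; rewrite !ffunE.
Qed.

Lemma tuples_imset n (A : {set gT}) : @tmap n @: tuples A n = tuples (f @: A) n.
Proof.
apply/setP=> u; apply/imsetP/tuplesP => [[t /tuplesP tA ->] i | uA].
  by rewrite ffunE imset_f.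
have /fin_all_exists[t tA] : forall i, exists x, x \in A /\ u i = f x.
  by move=> i; have /imsetP[x Ax ->] := uA i; exists x.
exists [ffun i => t i]; first by apply/tuplesP=> i; rewrite ffunE; case: (tA i).
by apply/ffunP=> i; rewrite !ffunE; case: (tA i).
Qed.

Lemma ctuples_imset n (A : {set gT}) :
  A \subset G -> @tmap n @: ctuples A n = ctuples (f @: A) n.
Proof.
move=> sAG; apply/setP=> u; rewrite [u \in ctuples _ _]inE -tuples_imset.
apply/imsetP/andP => [[t /setIdP[tA /forallP tC] ->] | [/imsetP[t tA ->] /forallP uC]].
  have tG k : t k \in G by apply: (subsetP sAG); move/tuplesP: tA.
  split; first exact: imset_f.
  by apply/forallP=> i; apply/forallP=> j; rewrite !ffunE f_comm ?(forallP (tC i)).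
have tG k : t k \in G by apply: (subsetP sAG); move/tuplesP: tA.
exists t => //; rewrite inE tA; apply/forallP=> i; apply/forallP=> j.
by rewrite -f_comm // -!(ffunE (fun k => f (t k))) (forallP (uC i)).
Qed.

Lemma card_tuples_imset n (A : {set gT}) :
  A \subset G -> #|tuples (f @: A) n| = #|tuples A n|.
Proof. by move=> sAG; rewrite -tuples_imset card_in_imset //; apply: tmap_inj. Qed.

Lemma card_ctuples_imset n (A : {set gT}) :
  A \subset G -> #|ctuples (f @: A) n| = #|ctuples A n|.
Proof.
move=> sAG; rewrite -ctuples_imset // card_in_imset //.
by apply: sub_in2 (tmap_inj sAG) => t /setIdP[].
Qed.

Lemma centralizer_imset a : a \in G -> f @: 'C_G[a] = 'C_H[f a].
Proof.
move=> Ga; apply/setP=> y.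
apply/imsetP/setIP => [[x /setIP[Gx /cent1P/eqP Cx] ->] | [Hy /cent1P/eqP Cy]].
  by rewrite -f_onto imset_f //; split=> //; apply/cent1P/eqP; rewrite f_comm.
move: Hy Cy; rewrite -f_onto => /imsetP[x Gx ->]; rewrite f_comm // => Cx.
by exists x; rewrite // inE Gx; apply/cent1P/eqP.
Qed.

Lemma card_comm_bij : #|G| = #|H|.
Proof. by rewrite -f_onto card_in_imset. Qed.

Lemma sum_comm_bij (F : hT -> nat) : \sum_(b in H) F b = \sum_(a in G) F (f a).
Proof. by rewrite -f_onto big_imset. Qed.

Lemma eq_alpha_comm_bij n : alpha G n = alpha H n.
Proof.
apply/eqP; rewrite -(eqn_pmul2r (cardG_gt0 G)) {2}card_comm_bij.
rewrite !alpha_Burnside sum_comm_bij; apply/eqP/eq_bigr => a Ga.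
by rewrite -centralizer_imset // card_tuples_imset // subsetIl.
Qed.

Lemma eq_beta_comm_bij n : beta G n = beta H n.
Proof.
apply/eqP; rewrite -(eqn_pmul2r (cardG_gt0 G)) {2}card_comm_bij.
rewrite !beta_Burnside sum_comm_bij; apply/eqP/eq_bigr => a Ga.
by rewrite -centralizer_imset // card_ctuples_imset // subsetIl.
Qed.

End CommutationPreservingBijection.

Section EqualCardBijection.
Variables (aT rT : finType) (A : {pred aT}) (B : {pred rT}) (a0 : aT).
Hypotheses (Aa0 : a0 \in A) (eqAB : #|A| = #|B|).

Definition card_bij (x : aT) : rT := enum_val (cast_ord eqAB (enum_rank_in Aa0 x)).

Lemma card_bijP x : card_bij x \in B.
Proof. exact: enum_valP. Qed.

Lemma card_bij_inj : {in A &, injective card_bij}.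
Proof.
move=> x y Ax Ay /enum_val_inj/cast_ord_inj/(congr1 enum_val).
by rewrite !enum_rankK_in.
Qed.

End EqualCardBijection.

Lemma mulg_repr_coset (gT : finGroupType) (K : {group gT}) g :
  g \in 'N(K) -> g * (repr (coset K g))^-1 \in K.
Proof.
move=> Ng; have : repr (coset K g) \in coset K g := mem_repr_coset _.
rewrite val_coset // => /rcosetP[z Kz ->].
by rewrite invMg mulgA mulgV mul1g groupV.
Qed.

Lemma repr_quotient (gT : finGroupType) (K G : {group gT}) (xbar : coset_of K) :
  K \subset G -> xbar \in G / K -> repr xbar \in G.
Proof.
move=> sKG /morphimP[g Ng Gg ->]; have : repr (coset K g) \in coset K g := mem_repr_coset _.
by rewrite val_coset // => /rcosetP[z Kz ->]; rewrite groupM // (subsetP sKG).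
Qed.

Lemma commg_eq1 (gT : finGroupType) (x y : gT) : ([~ x, y] == 1) = (x * y == y * x).
Proof. by apply/commgP/eqP. Qed.

Section Isoclinism.
Variables (gT hT : finGroupType) (G : {group gT}) (H : {group hT}).
Variables (theta : {morphism G / 'Z(G) >-> coset_of 'Z(H)}) (phi : {morphism G^`(1) >-> hT}).
Hypothesis theta_isom : isom (G / 'Z(G)) (H / 'Z(H)) theta.
Hypothesis phi_isom : isom G^`(1) H^`(1) phi.
Hypothesis phi_commg : forall g1 g2 h1 h2, g1 \in G -> g2 \in G -> h1 \in H -> h2 \in H ->
  theta (coset 'Z(G) g1) = coset 'Z(H) h1 -> theta (coset 'Z(G) g2) = coset 'Z(H) h2 ->
  phi [~ g1, g2] = [~ h1, h2].
Hypothesis cardGH : #|G| = #|H|.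

Lemma card_center_isoclinic : #|'Z(G)| = #|'Z(H)|.
Proof.
have := isom_card theta_isom; rewrite !card_quotient ?normal_norm ?center_normal //.
move=> eq_index; apply/eqP; rewrite -(eqn_pmul2r (indexg_gt0 G 'Z(G))).
by rewrite Lagrange ?center_sub // eq_index Lagrange ?center_sub // cardGH.
Qed.

Definition center_bij : gT -> hT := card_bij (group1 'Z(G)) card_center_isoclinic.

Definition isoclinism_map (g : gT) : hT :=
  center_bij (g * (repr (coset 'Z(G) g))^-1) * repr (theta (coset 'Z(G) g)).

Lemma mem_theta_coset g : g \in G -> theta (coset 'Z(G) g) \in H / 'Z(H).
Proof. by move=> Gg; rewrite -(isom_im theta_isom) mem_morphim ?mem_quotient. Qed.

Lemma isoclinism_mapP g : g \in G -> isoclinism_map g \in H.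
Proof.
move=> Gg; rewrite groupM ?(repr_quotient (center_sub H)) ?mem_theta_coset //.
exact: subsetP (center_sub H) _ (card_bijP _ _ _).
Qed.

Lemma coset_isoclinism_map g :
  g \in G -> coset 'Z(H) (isoclinism_map g) = theta (coset 'Z(G) g).
Proof. by move=> Gg; rewrite coset_kerl ?coset_reprK ?card_bijP. Qed.

Lemma isoclinism_map_inj : {in G &, injective isoclinism_map}.
Proof.
move=> x y Gx Gy eq_xy.
have eq_coset : coset 'Z(G) x = coset 'Z(G) y.
  apply: (injmP (isom_inj theta_isom)); rewrite ?mem_quotient //.
  by rewrite -!coset_isoclinism_map // eq_xy.
have nZG := subsetP (normal_norm (center_normal G)).
move: eq_xy (mulg_repr_coset (nZG x Gx)) (mulg_repr_coset (nZG y Gy)).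
rewrite /isoclinism_map eq_coset => /mulIg eq_z Zx Zy.
exact: mulIg (card_bij_inj Zx Zy eq_z).
Qed.

Lemma isoclinism_map_onto : isoclinism_map @: G = H.
Proof.
apply/eqP; rewrite eqEcard card_in_imset -?cardGH ?leqnn ?andbT; last exact: isoclinism_map_inj.
by apply/subsetP=> _ /imsetP[x Gx ->]; apply: isoclinism_mapP.
Qed.

Lemma isoclinism_map_comm : {in G &, forall x y,
  (isoclinism_map x * isoclinism_map y == isoclinism_map y * isoclinism_map x) =
  (x * y == y * x)}.
Proof.
move=> x y Gx Gy; rewrite -!commg_eq1.
rewrite -(phi_commg Gx Gy (isoclinism_mapP Gx) (isoclinism_mapP Gy)) ?coset_isoclinism_map //.
by rewrite (morph_injm_eq1 (isom_inj phi_isom)) // mem_commg.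
Qed.

End Isoclinism.

Lemma isoclinic_comm_bij (gT hT : finGroupType) (G : {group gT}) (H : {group hT}) :
  isoclinic G H -> #|G| = #|H| ->
  exists f : gT -> hT, [/\ {in G &, injective f}, f @: G = H &
    {in G &, forall x y, (f x * f y == f y * f x) = (x * y == y * x)}].
Proof.
move=> [theta [phi [theta_isom phi_isom phi_commg]]] cardGH.
exists (isoclinism_map theta_isom cardGH); split.
- exact: isoclinism_map_inj.
- exact: isoclinism_map_onto.
- exact: (isoclinism_map_comm theta_isom phi_isom phi_commg cardGH).
Qed.

Theorem corollary4p4 (gT hT : finGroupType) (G : {group gT}) (H : {group hT}) :
  isoclinic G H -> #|G| = #|H| ->
  (forall n : nat, alpha G n = alpha H n) /\ (forall n : nat, beta G n = beta H n).
Proof.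
move=> isoGH cardGH; have [f [f_inj f_onto f_comm]] := isoclinic_comm_bij isoGH cardGH.
by split=> n; [exact: (eq_alpha_comm_bij f_inj f_onto f_comm)
               | exact: (eq_beta_comm_bij f_inj f_onto f_comm)].
Qed.
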